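(* There exists a closed convex cone $\mathcal{K}\subseteq \mathbb{R}^4$ that is nice but not amenable.
   Context: A face of a closed convex set $C$ is a closed convex subset $F\subseteq C$ such that whenever $x,y\in C$ and $\alpha x+(1-\alpha)y\in F$ for some $\alpha\in(0,1)$, then $x,y\in F$. For a set $S$, $\mathcal{K}^*$ denotes the dual cone $\{y: \langle y,x\rangle\ge 0\ \forall x\in\mathcal{K}\}$ and $S^\perp$ the orthogonal complement. A closed convex cone $\mathcal{K}$ is nice (facially dual complete) if $\mathcal{F}^*=\mathcal{K}^*+\mathcal{F}^\perp$ for every face $\mathcal{F}$ of $\mathcal{K}$. A face $F$ of a closed convex set $C$ is amenable if for every bounded set $B$ there exists $\kappa>0$ such that $\operatorname{dist}(x,F)\le\kappa\operatorname{dist}(x,C)$ for all $x\in(\operatorname{aff}F)\cap B$; $C$ is amenable if all its faces are amenable. (For a cone this is equivalent to: for each face $\mathcal{F}$ there is $\kappa>0$ with $\operatorname{dist}(x,\mathcal{F})\le\kappa\operatorname{dist}(x,\mathcal{K})$ for all $x\in\operatorname{span}\mathcal{F}$.) *)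

From mathcomp Require Import all_boot all_order all_algebra.
From mathcomp Require Import all_classical all_reals all_analysis.
From mathcomp Require Import Rstruct Rstruct_topology.
Set Implicit Arguments. Unset Strict Implicit. Unset Printing Implicit Defensive.
Import Order.TTheory GRing.Theory Num.Theory numFieldNormedType.Exports.
Local Open Scope classical_set_scope.
Local Open Scope ring_scope.

Section ConeDefs.
Variables (R : realType) (n : nat).
Notation V := 'rV[R]_n.

Definition dotv (x y : V) : R := \sum_(i < n) x ord0 i * y ord0 i.
Definition enorm (x : V) : R := Num.sqrt (dotv x x).

(* Euclidean distance to a set (inf of the empty set is 0 by convention) *)
Definition edist (x : V) (S : set V) : R := inf [set enorm (x - y) | y in S].

Definition convex_set (C : set V) : Prop :=
  forall x y (a : R), C x -> C y -> 0 <= a -> a <= 1 -> C (a *: x + (1 - a) *: y).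

Definition is_cone (K : set V) : Prop :=
  K 0 /\ forall x (t : R), K x -> 0 <= t -> K (t *: x).

Definition closed_convex_cone (K : set V) : Prop :=
  closed K /\ convex_set K /\ is_cone K.

Definition is_face (C F : set V) : Prop :=
  F `<=` C /\ closed F /\ convex_set F /\
  forall x y (a : R), C x -> C y -> 0 < a -> a < 1 ->
    F (a *: x + (1 - a) *: y) -> F x /\ F y.

Definition dual_cone (S : set V) : set V := [set y | forall x, S x -> 0 <= dotv y x].
Definition orth (S : set V) : set V := [set y | forall x, S x -> dotv y x = 0].
Definition msum (A B : set V) : set V := [set a + b | a in A & b in B].

Definition nice (K : set V) : Prop :=
  forall F, is_face K F -> dual_cone F = msum (dual_cone K) (orth F).

Definition aff (S : set V) : set V :=
  [set x | exists (k : nat) (l : 'I_k -> R) (y : 'I_k -> V),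
     (forall i, S (y i)) /\ \sum_(i < k) l i = 1 /\ x = \sum_(i < k) l i *: y i].

Definition bounded_set (B : set V) : Prop := exists M : R, forall x, B x -> enorm x <= M.

Definition amenable_face (C F : set V) : Prop :=
  forall B, bounded_set B -> exists kappa : R, 0 < kappa /\
    forall x, aff F x -> B x -> edist x F <= kappa * edist x C.

Definition amenable (C : set V) : Prop :=
  forall F, is_face C F -> amenable_face C F.

End ConeDefs.

From Pilot Require Import Defs.
From mathcomp Require Import all_boot all_order all_algebra.
From mathcomp Require Import all_classical all_reals all_analysis.
From mathcomp Require Import Rstruct Rstruct_topology.
From mathcomp Require Import ring lra.
Import Defs.
Set Implicit Arguments. Unset Strict Implicit. Unset Printing Implicit Defensive.
Import Order.TTheory GRing.Theory Num.Theory numFieldNormedType.Exports.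
Local Open Scope classical_set_scope.
Local Open Scope ring_scope.

(* K = example_cone is the Minkowski sum of the round cone
   K1 = disk_cone = {z = 0, x^2 + y^2 <= t^2, t >= 0} and the quartic cone
   K2 = quartic_cone = {x = t >= 0, z >= 0, y^4 <= z t^3}.

   K1 = K /\ {z = 0} is a face of K.  Since K1 is round, the point (1, s, 0, 1) of
   its span lies at distance of order s^2 from K1, but only at distance s^4 from K,
   which contains (1, s, s^4, 1) in K2; so K is not amenable.

   Every face of K is the sum of its intersections with K1 and K2, and each of these
   is the whole cone or lies on a single ray (a relative interior point of K1 or K2
   can be perturbed inside the face in every direction).  A functional nonnegative on
   the face therefore extends to an element of the dual of K agreeing with it on the
   face, built from the Lorentz inequality, the tangent functionals of the quartic
   curve and an AM-GM estimate; so K is nice. *)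

(** * Inner product and distance *)

Section InnerProduct.
Variables (R : realType) (n : nat).
Implicit Types (x y z w : 'rV[R]_n) (S : set 'rV[R]_n).

Lemma dotvC x y : dotv x y = dotv y x.
Proof. by apply: eq_bigr => i _; rewrite mulrC. Qed.

Lemma dotvDl x y z : dotv (x + y) z = dotv x z + dotv y z.
Proof. by rewrite /dotv -big_split; apply: eq_bigr => i _; rewrite mxE mulrDl. Qed.

Lemma dotvDr x y z : dotv x (y + z) = dotv x y + dotv x z.
Proof. by rewrite dotvC dotvDl !(dotvC x). Qed.

Lemma dotvZl a x y : dotv (a *: x) y = a * dotv x y.
Proof. by rewrite /dotv mulr_sumr; apply: eq_bigr => i _; rewrite mxE mulrA. Qed.

Lemma dotvZr a x y : dotv x (a *: y) = a * dotv x y.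
Proof. by rewrite dotvC dotvZl dotvC. Qed.

Lemma dotvBl x y z : dotv (x - y) z = dotv x z - dotv y z.
Proof. by rewrite dotvDl -scaleN1r dotvZl mulN1r. Qed.

Lemma dotvBr x y z : dotv x (y - z) = dotv x y - dotv x z.
Proof. by rewrite dotvC dotvBl !(dotvC x). Qed.

Lemma dotvv_ge0 x : 0 <= dotv x x.
Proof. by apply: sumr_ge0 => i _; rewrite -expr2 sqr_ge0. Qed.

Lemma dotvv_eq0 x : dotv x x = 0 -> x = 0.
Proof.
move=> /eqP; rewrite psumr_eq0 => [/allP x0|i _]; last by rewrite -expr2 sqr_ge0.
apply/rowP => i; rewrite mxE; apply/eqP.
by rewrite -sqrf_eq0 expr2; apply: x0; rewrite mem_index_enum.
Qed.

Lemma enorm_ge0 x : 0 <= enorm x.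
Proof. exact: sqrtr_ge0. Qed.

Lemma dotv_le_enorm x y : dotv x y <= enorm x * enorm y.
Proof.
have [b_le0|b_gt0] := leP (dotv x y) 0.
  by apply: le_trans b_le0 _; rewrite mulr_ge0 ?enorm_ge0.
suff : dotv x y ^+ 2 <= dotv x x * dotv y y.
  rewrite /enorm -sqrtrM ?dotvv_ge0 // => /ler_wsqrtr.
  by rewrite sqrtr_sqr gtr0_norm.
have [y0|yy_gt0] := eqVneq (dotv y y) 0.
  have -> : dotv x y = 0 by rewrite (dotvv_eq0 y0) /dotv big1 // => i _; rewrite mxE mulr0.
  by rewrite y0 expr0n mulr0.
set a := dotv x x; set b := dotv x y; set c := dotv y y.
(* 0 <= |c x - b y|^2 = c (a c - b^2) *)
have := dotvv_ge0 (c *: x - b *: y).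
rewrite !(dotvBl, dotvBr, dotvZl, dotvZr) (dotvC y x) -/a -/b -/c.
have -> : c * (c * a - b * b) - b * (c * b - b * c) = c * (a * c - b ^+ 2) by ring.
by rewrite pmulr_rge0 ?subr_ge0 // lt_neqAle eq_sym yy_gt0 dotvv_ge0.
Qed.

Lemma edist_le x S y : S y -> edist x S <= enorm (x - y).
Proof.
move=> Sy; apply: ge_inf; last by exists y.
by exists 0 => _ [z _ <-]; exact: enorm_ge0.
Qed.

Lemma edist_ge x S m : S !=set0 -> (forall y, S y -> m <= enorm (x - y)) ->
  m <= edist x S.
Proof.
move=> [y0 Sy0] h; apply: lb_le_inf; first by exists (enorm (x - y0)), y0.
by move=> _ [z Sz <-]; exact: h.
Qed.

Lemma edist_ge_halfspace w x S : S !=set0 -> (forall y, S y -> dotv w y <= 0) ->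
  dotv w x <= enorm w * edist x S.
Proof.
move=> S0 hS.
have dist_ge y : S y -> dotv w x <= enorm w * enorm (x - y).
  move=> Sy; apply: le_trans (dotv_le_enorm w (x - y)).
  by rewrite dotvBr lerDl oppr_ge0 hS.
have [w0|w_gt0] := eqVneq (enorm w) 0.
  by have [y Sy] := S0; have := dist_ge y Sy; rewrite w0 !mul0r.
have {}w_gt0 : 0 < enorm w by rewrite lt_neqAle eq_sym w_gt0 enorm_ge0.
rewrite -ler_pdivrMl //; apply: edist_ge => // y Sy.
by rewrite ler_pdivrMl // dist_ge.
Qed.

End InnerProduct.

(** * Faces and duals of convex cones *)

Section ConvexCones.
Variables (R : realType) (n : nat).
Notation V := 'rV[R]_n.
Implicit Types (A B K F : set V).

Definition addr_closed_set K := forall x y, K x -> K y -> K (x + y).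

Lemma cone_convex K : is_cone K -> addr_closed_set K -> convex_set K.
Proof.
move=> [_ coneK] addK x y a Kx Ky a_ge0 a_le1.
by apply: addK; apply: coneK; rewrite ?subr_ge0.
Qed.

Lemma is_cone_msum A B : is_cone A -> is_cone B -> is_cone (msum A B).
Proof.
move=> [A0 coneA] [B0 coneB]; split; first by exists 0 => //; exists 0 => //; rewrite addr0.
move=> _ t [a Aa [b Bb <-]] t_ge0.
by exists (t *: a); [exact: coneA | exists (t *: b); [exact: coneB | rewrite scalerDr]].
Qed.

Lemma msum_addr_closed A B :
  addr_closed_set A -> addr_closed_set B -> addr_closed_set (msum A B).
Proof.
move=> addA addB _ _ [a1 Aa1 [b1 Bb1 <-]] [a2 Aa2 [b2 Bb2 <-]].
by exists (a1 + a2); [exact: addA | exists (b1 + b2); [exact: addB | rewrite addrACA]].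
Qed.

Lemma msum_subl A B : B 0 -> A `<=` msum A B.
Proof. by move=> B0 a Aa; exists a => //; exists 0 => //; rewrite addr0. Qed.

Lemma msum_subr A B : A 0 -> B `<=` msum A B.
Proof. by move=> A0 b Bb; exists 0 => //; exists b => //; rewrite add0r. Qed.

Lemma dual_cone_add A k1 k2 : dual_cone A k1 -> dual_cone A k2 -> dual_cone A (k1 + k2).
Proof. by move=> h1 h2 a Aa; rewrite dotvDl addr_ge0 ?h1 ?h2. Qed.

Lemma dual_cone_scale A a k : 0 <= a -> dual_cone A k -> dual_cone A (a *: k).
Proof. by move=> a_ge0 h x Ax; rewrite dotvZl mulr_ge0 ?h. Qed.

Lemma dual_cone_msum A B k : dual_cone A k -> dual_cone B k -> dual_cone (msum A B) k.
Proof.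
by move=> hA hB _ [a Aa [b Bb <-]]; rewrite dotvDr; exact: addr_ge0 (hA _ Aa) (hB _ Bb).
Qed.

Lemma closed_msum A B : closed A -> closed B ->
    (forall a b, A a -> B b -> `|a| <= `|a + b| /\ `|b| <= `|a + b|) ->
  closed (msum A B).
Proof.
move=> clA clB summand_le v clv.
pose r := `|v| + 1.
have compact_ball (C : set V) : closed C -> compact [set a | C a /\ `|a| <= r].
  move=> clC; apply: bounded_closed_compact.
    exists r; split; first exact: num_real.
    by move=> M /ltW rM x [_ /le_trans]; apply.
  apply: closedI => //.
  apply: (@preimage_closed _ _ (fun a : V => `|a|) [set x | x <= r]).
    by move=> x _; exact: norm_continuous.
  exact: closed_le.
pose P := [set z.1 + z.2 | z in [set a | A a /\ `|a| <= r] `*` [set b | B b /\ `|b| <= r]].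
have clP : closed P.
  apply: compact_closed; first exact: norm_hausdorff.
  apply: continuous_compact; last exact: compact_setX (compact_ball _ clA) (compact_ball _ clB).
  by apply: continuous_subspaceT => z; exact: add_continuous.
have : P v.
  apply: clP => N Nv.
  have Nv' : nbhs v (N `&` ball v 1) by apply: filterI => //; exact: nbhsx_ballx.
  have [_ [[a Aa [b Bb <-]] [Nab vab]]] := clv _ Nv'.
  have ab_le : `|a + b| <= r.
    move: vab; rewrite -ball_normE /= -normrN opprB => /ltW vab.
    by rewrite -(subrK v (a + b)) (le_trans (ler_normD _ _)) // addrC lerD2l.
  have [a_le b_le] := summand_le a b Aa Bb.
  exists (a + b); split => //; exists (a, b) => //.
  by split; split => //; apply: le_trans ab_le.
by move=> [[a b] [[Aa _] [Bb _]] <-]; exists a => //; exists b.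
Qed.

Section FaceOfCone.
Variables K F : set V.
Hypotheses (coneK : is_cone K) (faceF : is_face K F).

Let half_gt0 : 0 < 2^-1 :> R. Proof. by rewrite invr_gt0. Qed.
Let half_lt1 : 2^-1 < 1 :> R. Proof. by rewrite invf_lt1 // ltr1n. Qed.
Let halfK : 2^-1 * 2 = 1 :> R. Proof. by rewrite mulVf // pnatr_eq0. Qed.
Let onemhalfK : (1 - 2^-1) * 2 = 1 :> R. Proof. by rewrite mulrBl mul1r halfK; lra. Qed.

Lemma face_sub x : F x -> K x. Proof. by case: faceF => /(_ x). Qed.

Lemma face_extreme x y a : K x -> K y -> 0 < a -> a < 1 ->
  F (a *: x + (1 - a) *: y) -> F x /\ F y.
Proof. by case: faceF => _ [_ [_]]; apply. Qed.

Lemma face_convex : convex_set F. Proof. by case: faceF => _ [_ []]. Qed.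

Lemma face0 x : F x -> F 0.
Proof.
move=> Fx; have [K0 scaleK] := coneK.
have := @face_extreme 0 (2 *: x) 2^-1 K0 (scaleK _ _ (face_sub Fx) (ler0n _ 2)).
rewrite scaler0 add0r scalerA onemhalfK scale1r.
by move=> /(_ half_gt0 half_lt1 Fx) [].
Qed.

Lemma face_summands x y : K x -> K y -> F (x + y) -> F x /\ F y.
Proof.
move=> Kx Ky Fxy; have scaleK := coneK.2.
have F2 z : F (2 *: z) -> F z.
  move=> F2z; have := face_convex F2z (face0 F2z) (ltW half_gt0) (ltW half_lt1).
  by rewrite scaler0 addr0 scalerA halfK scale1r.
have := @face_extreme (2 *: x) (2 *: y) 2^-1
  (scaleK _ _ Kx (ler0n _ 2)) (scaleK _ _ Ky (ler0n _ 2)).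
rewrite !scalerA halfK onemhalfK !scale1r.
by move=> /(_ half_gt0 half_lt1 Fxy) [/F2 Fx /F2 Fy].
Qed.

Lemma face_scale x a : F x -> 0 <= a -> F (a *: x).
Proof.
move=> Fx a_ge0; have Kx := face_sub Fx.
have [a_le1|a_gt1] := leP a 1.
  by have := face_convex Fx (face0 Fx) a_ge0 a_le1; rewrite scaler0 addr0.
have a_neq0 : a != 0 by rewrite gt_eqF // (lt_trans ltr01).
have := @face_extreme (a *: x) 0 a^-1 (coneK.2 _ _ Kx a_ge0) coneK.1.
rewrite scaler0 addr0 scalerA mulVf // scale1r invr_gt0 invf_lt1 ?(lt_trans ltr01) //.
by move=> /(_ isT a_gt1 Fx) [].
Qed.

Lemma face_scale_inv x a : 0 < a -> F (a *: x) -> F x.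
Proof.
move=> a_gt0 /(face_scale (a := a^-1)); rewrite scalerA mulVf ?gt_eqF // scale1r.
by apply; rewrite invr_ge0 ltW.
Qed.

Lemma face_add x y : F x -> F y -> F (x + y).
Proof.
move=> Fx Fy.
have := face_convex Fx Fy (ltW half_gt0) (ltW half_lt1).
move=> /(face_scale (a := 2)) /(_ (ler0n _ 2)).
by rewrite scalerDr !scalerA !(mulrC 2) halfK onemhalfK !scale1r.
Qed.

Lemma face_dominated p q a : F p -> 0 < a -> K (p - a *: q) -> K q -> F q.
Proof.
move=> Fp a_gt0 Kpq Kq.
have Kaq := coneK.2 _ _ Kq (ltW a_gt0).
have Fpq : F (p - a *: q + a *: q) by rewrite subrK.
by have [_ /face_scale_inv] := face_summands Kpq Kaq Fpq; apply.
Qed.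

End FaceOfCone.

Lemma face_msum A B F f : is_cone A -> is_cone B -> is_face (msum A B) F -> F f ->
  exists a b, [/\ A a, B b, F a, F b & f = a + b].
Proof.
move=> coneA coneB faceF Ff.
have [a Aa [b Bb abf]] := face_sub faceF Ff.
have coneAB := is_cone_msum coneA coneB.
have [] := face_summands coneAB faceF (msum_subl coneB.1 Aa) (msum_subr coneA.1 Bb).
  by rewrite abf.
by move=> Fa Fb; exists a, b.
Qed.

Lemma nice_of_dual_extension K :
    (forall F y, is_face K F -> dual_cone F y ->
       exists2 k, dual_cone K k & forall f, F f -> dotv k f = dotv y f) ->
  nice K.
Proof.
move=> ext F faceF; apply/seteqP; split => y.
  move=> Fy; have [k Kk ky] := ext F y faceF Fy.
  exists k => //; exists (y - k); last by rewrite addrC subrK.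
  by move=> f Ff; rewrite dotvBl ky // subrr.
move=> [k Kk [w Fw <-]] f Ff.
by rewrite dotvDl Fw // addr0; apply/Kk/(face_sub faceF).
Qed.

End ConvexCones.

(** * Real inequalities *)

Section RealAlgebra.
Variable R : rcfType.
Implicit Types a b y z t w : R.

Lemma ler_of_sqr a b : 0 <= b -> a ^+ 2 <= b ^+ 2 -> a <= b.
Proof. by move=> b_ge0 ab; rewrite leNgt; apply/negP => ba; nra. Qed.

Lemma ltr_of_sqr a b : 0 <= b -> a ^+ 2 < b ^+ 2 -> a < b.
Proof. by move=> b_ge0 ab; rewrite ltNge; apply/negP => ba; nra. Qed.

Lemma expr4_le0 y : y ^+ 4 <= 0 -> y = 0.
Proof.
move=> y4_le0; have : y ^+ 4 == 0 by rewrite eq_le y4_le0 exprn_even_ge0.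
by rewrite expf_eq0 => /eqP.
Qed.

Lemma lorentz_dot (x1 y1 t1 x2 y2 t2 : R) : 0 <= t1 -> 0 <= t2 ->
    x1 ^+ 2 + y1 ^+ 2 <= t1 ^+ 2 -> x2 ^+ 2 + y2 ^+ 2 <= t2 ^+ 2 ->
  x1 * x2 + y1 * y2 <= t1 * t2.
Proof.
move=> t1_ge0 t2_ge0 h1 h2; apply: ler_of_sqr; first exact: mulr_ge0.
have -> : (x1 * x2 + y1 * y2) ^+ 2 =
  (x1 ^+ 2 + y1 ^+ 2) * (x2 ^+ 2 + y2 ^+ 2) - (x1 * y2 - x2 * y1) ^+ 2 by ring.
have := ler_pM (addr_ge0 (sqr_ge0 x1) (sqr_ge0 y1)) (addr_ge0 (sqr_ge0 x2) (sqr_ge0 y2)) h1 h2.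
by have := sqr_ge0 (x1 * y2 - x2 * y1); rewrite exprMn; lra.
Qed.

Lemma lorentz_add (x1 y1 t1 x2 y2 t2 : R) : 0 <= t1 -> 0 <= t2 ->
    x1 ^+ 2 + y1 ^+ 2 <= t1 ^+ 2 -> x2 ^+ 2 + y2 ^+ 2 <= t2 ^+ 2 ->
  (x1 + x2) ^+ 2 + (y1 + y2) ^+ 2 <= (t1 + t2) ^+ 2.
Proof. by move=> t1_ge0 t2_ge0 h1 h2; have := lorentz_dot t1_ge0 t2_ge0 h1 h2; nra. Qed.

Lemma rotated_lorentz_add y1 y2 (w1 w2 t1 t2 : R) :
    0 <= w1 -> 0 <= w2 -> 0 <= t1 -> 0 <= t2 ->
    y1 ^+ 2 <= w1 * t1 -> y2 ^+ 2 <= w2 * t2 ->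
  (y1 + y2) ^+ 2 <= (w1 + w2) * (t1 + t2).
Proof.
move=> w1_ge0 w2_ge0 t1_ge0 t2_ge0 h1 h2.
have cross : (2 * (y1 * y2)) ^+ 2 <= (w1 * t2 + w2 * t1) ^+ 2.
  have := ler_pM (sqr_ge0 y1) (sqr_ge0 y2) h1 h2.
  by have := sqr_ge0 (w1 * t2 - w2 * t1); rewrite !exprMn; nra.
have := ler_of_sqr (addr_ge0 (mulr_ge0 w1_ge0 t2_ge0) (mulr_ge0 w2_ge0 t1_ge0)) cross.
nra.
Qed.

Lemma quartic_add y1 y2 (z1 z2 t1 t2 : R) : 0 <= z1 -> 0 <= z2 -> 0 <= t1 -> 0 <= t2 ->
    y1 ^+ 4 <= z1 * t1 ^+ 3 -> y2 ^+ 4 <= z2 * t2 ^+ 3 ->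
  (y1 + y2) ^+ 4 <= (z1 + z2) * (t1 + t2) ^+ 3.
Proof.
move=> z1_ge0 z2_ge0 t1_ge0 t2_ge0 h1 h2.
(* with w = sqrt (z t), y^4 <= z t^3 splits into the rotated-cone inequalities
   y^2 <= w t and w^2 <= z t, both preserved by sums *)
pose w1 := Num.sqrt (z1 * t1); pose w2 := Num.sqrt (z2 * t2).
have w1_ge0 : 0 <= w1 := sqrtr_ge0 _.
have w2_ge0 : 0 <= w2 := sqrtr_ge0 _.
have w1E : w1 ^+ 2 = z1 * t1 by rewrite sqr_sqrtr ?mulr_ge0.
have w2E : w2 ^+ 2 = z2 * t2 by rewrite sqr_sqrtr ?mulr_ge0.
have root_le y z t w : 0 <= w -> 0 <= t -> w ^+ 2 = z * t -> y ^+ 4 <= z * t ^+ 3 ->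
    y ^+ 2 <= w * t.
  move=> w_ge0 t_ge0 wE yzt; apply: ler_of_sqr; first exact: mulr_ge0.
  by rewrite -exprM exprMn wE -mulrA -exprS.
have Y := rotated_lorentz_add w1_ge0 w2_ge0 t1_ge0 t2_ge0
  (root_le _ _ _ _ w1_ge0 t1_ge0 w1E h1) (root_le _ _ _ _ w2_ge0 t2_ge0 w2E h2).
have W : (w1 + w2) ^+ 2 <= (z1 + z2) * (t1 + t2).
  by apply: rotated_lorentz_add; rewrite ?w1E ?w2E.
have -> : (y1 + y2) ^+ 4 = ((y1 + y2) ^+ 2) ^+ 2 by rewrite -exprM.
rewrite (@le_trans _ _ (((w1 + w2) * (t1 + t2)) ^+ 2)) //.
  by rewrite ler_sqr ?nnegrE ?sqr_ge0 ?mulr_ge0 ?addr_ge0.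
rewrite exprMn (_ : (z1 + z2) * (t1 + t2) ^+ 3 = (z1 + z2) * (t1 + t2) * (t1 + t2) ^+ 2).
  by rewrite ler_wpM2r ?sqr_ge0.
by rewrite -mulrA -exprS.
Qed.

Lemma quartic_le_of_rotated y z t w : 0 <= t ->
  y ^+ 2 <= w * t -> w ^+ 2 <= z * t -> y ^+ 4 <= z * t ^+ 3.
Proof.
move=> t_ge0 ywt wzt; have wt_ge0 : 0 <= w * t := le_trans (sqr_ge0 y) ywt.
have -> : y ^+ 4 = (y ^+ 2) ^+ 2 by rewrite -exprM.
rewrite (le_trans (_ : _ <= (w * t) ^+ 2)) ?ler_sqr ?nnegrE ?sqr_ge0 //.
by rewrite exprMn (_ : z * t ^+ 3 = z * t * t ^+ 2) ?ler_wpM2r ?sqr_ge0 // -mulrA -exprS.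
Qed.

Lemma quartic_interior_split y z t : 0 < t -> y ^+ 4 < z * t ^+ 3 ->
  exists2 w, 0 < w & y ^+ 2 < w * t /\ w ^+ 2 < z * t.
Proof.
move=> t_gt0 yzt.
have zt_gt0 : 0 < z * t.
  have : 0 < z * t ^+ 3 by apply: le_lt_trans yzt; exact: exprn_even_ge0.
  by rewrite pmulr_lgt0 ?exprn_gt0 // pmulr_lgt0.
(* any w strictly between y^2 / t and sqrt (z t) works *)
pose u := y ^+ 2 / t; pose r := Num.sqrt (z * t).
have u_ge0 : 0 <= u by rewrite divr_ge0 ?sqr_ge0 ?ltW.
have r_gt0 : 0 < r by rewrite sqrtr_gt0.
have rE : r ^+ 2 = z * t by rewrite sqr_sqrtr ?ltW.
have uE : u * t = y ^+ 2 by rewrite divfK ?gt_eqF.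
have u_lt_r : u < r.
  apply: ltr_of_sqr; first exact: ltW.
  rewrite rE -(ltr_pM2r (exprn_gt0 2 t_gt0)) -exprMn uE -exprM.
  by rewrite -mulrA -exprS.
exists ((u + r) / 2); first by rewrite divr_gt0 ?ltr_wpDl.
split; first by rewrite -uE ltr_pM2r // ltr_pdivlMr // mulr_natr mulr2n ltrD2l.
have r_ge0 := ltW r_gt0.
rewrite -rE ltr_sqr ?nnegrE ?divr_ge0 ?addr_ge0 ?u_ge0 ?r_ge0 //.
by rewrite ltr_pdivrMr // mulr_natr mulr2n ltrD2r.
Qed.

Lemma rotated_lorentz_perturb y w t yq wq tq : y ^+ 2 < w * t -> 0 < w -> 0 < t ->
    0 <= wq -> 0 <= tq ->
  exists2 a0, 0 < a0 & forall a, 0 < a -> a <= a0 ->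
    [/\ (y - a * yq) ^+ 2 < (w - a * wq) * (t - a * tq), 0 < w - a * wq & 0 < t - a * tq].
Proof.
move=> ywt w_gt0 t_gt0 wq_ge0 tq_ge0.
set d := w * t - y ^+ 2.
have d_gt0 : 0 < d by rewrite subr_gt0.
set M := `|w * tq + wq * t - 2 * y * yq| + yq ^+ 2.
have M_ge0 : 0 <= M by rewrite addr_ge0 ?sqr_ge0.
exists (Num.min (d / (M + 1)) (Num.min (w / (wq + 1)) (Num.min (t / (tq + 1)) 1))).
  by rewrite !lt_min ltr01 !divr_gt0 // ltr_wpDl.
move=> a a_gt0; rewrite !le_min => /and4P[h1 h2 h3 a_le1].
have {}h1 : a * (M + 1) <= d by rewrite -ler_pdivlMr //; lra.
have {}h2 : a * (wq + 1) <= w by rewrite -ler_pdivlMr //; lra.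
have {}h3 : a * (tq + 1) <= t by rewrite -ler_pdivlMr //; lra.
split; [|nra|nra].
have -> : (y - a * yq) ^+ 2 = w * t - d - a * (2 * y * yq) + a ^+ 2 * yq ^+ 2 by rewrite /d; ring.
have := ler_norm (w * tq + wq * t - 2 * y * yq).
have : a ^+ 2 * yq ^+ 2 <= a * yq ^+ 2 by apply: ler_wpM2r; rewrite ?sqr_ge0 // expr2; nra.
have : 0 <= a ^+ 2 * (wq * tq) by apply: mulr_ge0; [exact: sqr_ge0 | exact: mulr_ge0].
rewrite /M in h1; nra.
Qed.

End RealAlgebra.

(** * The cone *)

Section Coordinates.
Variable R : realType.
Notation V := 'rV[R]_4.
Implicit Types (u v : V) (a b c d : R).

Definition row4 a b c d : V := \row_(i < 4) nth 0 [:: a; b; c; d] i.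
Definition cX v := v ord0 (@Ordinal 4 0 isT).
Definition cY v := v ord0 (@Ordinal 4 1 isT).
Definition cZ v := v ord0 (@Ordinal 4 2 isT).
Definition cT v := v ord0 (@Ordinal 4 3 isT).

Lemma row4_eta v : v = row4 (cX v) (cY v) (cZ v) (cT v).
Proof.
by apply/rowP => -[[|[|[|[|i]]]] lti] //; rewrite mxE //=; congr (v ord0 _); apply: val_inj.
Qed.

Lemma row4P u v : cX u = cX v -> cY u = cY v -> cZ u = cZ v -> cT u = cT v -> u = v.
Proof. by move=> eX eY eZ eT; rewrite [u]row4_eta [v]row4_eta eX eY eZ eT. Qed.

Lemma row4X a b c d : cX (row4 a b c d) = a. Proof. by rewrite /cX mxE. Qed.
Lemma row4Y a b c d : cY (row4 a b c d) = b. Proof. by rewrite /cY mxE. Qed.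
Lemma row4Z a b c d : cZ (row4 a b c d) = c. Proof. by rewrite /cZ mxE. Qed.
Lemma row4T a b c d : cT (row4 a b c d) = d. Proof. by rewrite /cT mxE. Qed.

Lemma cXD u v : cX (u + v) = cX u + cX v. Proof. by rewrite /cX mxE. Qed.
Lemma cYD u v : cY (u + v) = cY u + cY v. Proof. by rewrite /cY mxE. Qed.
Lemma cZD u v : cZ (u + v) = cZ u + cZ v. Proof. by rewrite /cZ mxE. Qed.
Lemma cTD u v : cT (u + v) = cT u + cT v. Proof. by rewrite /cT mxE. Qed.
Lemma cXZ a v : cX (a *: v) = a * cX v. Proof. by rewrite /cX mxE. Qed.
Lemma cYZ a v : cY (a *: v) = a * cY v. Proof. by rewrite /cY mxE. Qed.
Lemma cZZ a v : cZ (a *: v) = a * cZ v. Proof. by rewrite /cZ mxE. Qed.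
Lemma cTZ a v : cT (a *: v) = a * cT v. Proof. by rewrite /cT mxE. Qed.
Lemma cXN v : cX (- v) = - cX v. Proof. by rewrite /cX mxE. Qed.
Lemma cYN v : cY (- v) = - cY v. Proof. by rewrite /cY mxE. Qed.
Lemma cZN v : cZ (- v) = - cZ v. Proof. by rewrite /cZ mxE. Qed.
Lemma cTN v : cT (- v) = - cT v. Proof. by rewrite /cT mxE. Qed.
Lemma cX0 : cX 0 = 0. Proof. by rewrite /cX mxE. Qed.
Lemma cY0 : cY 0 = 0. Proof. by rewrite /cY mxE. Qed.
Lemma cZ0 : cZ 0 = 0. Proof. by rewrite /cZ mxE. Qed.
Lemma cT0 : cT 0 = 0. Proof. by rewrite /cT mxE. Qed.

Definition coordE := (row4X, row4Y, row4Z, row4T, cXD, cYD, cZD, cTD, cXZ, cYZ, cZZ, cTZ,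
  cXN, cYN, cZN, cTN, cX0, cY0, cZ0, cT0).

Lemma dotv4E u v : dotv u v = cX u * cX v + cY u * cY v + cZ u * cZ v + cT u * cT v.
Proof.
rewrite /dotv !big_ord_recr big_ord0 /= add0r /cX /cY /cZ /cT.
by congr (_ + _ + _ + _); congr (_ * _); congr (_ _ _); apply: val_inj.
Qed.

Lemma enorm4E v : enorm v = Num.sqrt (cX v ^+ 2 + cY v ^+ 2 + cZ v ^+ 2 + cT v ^+ 2).
Proof. by rewrite /enorm dotv4E !expr2. Qed.

Lemma normr_le4 v (M : R) : 0 <= M ->
  `|cX v| <= M -> `|cY v| <= M -> `|cZ v| <= M -> `|cT v| <= M -> `|v| <= M.
Proof.
move=> M_ge0 hX hY hZ hT; rewrite [X in X <= _]/Num.norm /= mx_normrE.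
apply: bigmax_le => // -[i j] _ /=; rewrite (ord1 i).
by case: j => -[|[|[|[|j]]]] ltj //; [move: hX | move: hY | move: hZ | move: hT];
  congr (`|v ord0 _| <= M); apply: val_inj.
Qed.

Lemma normr_coord_le v i : `|v ord0 i| <= `|v|.
Proof.
rewrite [X in _ <= X]/Num.norm /= mx_normrE.
exact: le_trans (le_bigmax _ _ (ord0, i)).
Qed.

End Coordinates.

Section TheCone.
Variable R : realType.
Notation V := 'rV[R]_4.
Implicit Types (u v : V).

Definition disk_cone : set V :=
  [set v | cZ v = 0 /\ 0 <= cT v /\ cX v ^+ 2 + cY v ^+ 2 <= cT v ^+ 2].
Definition quartic_cone : set V :=
  [set v | cX v = cT v /\ 0 <= cT v /\ 0 <= cZ v /\ cY v ^+ 4 <= cZ v * cT v ^+ 3].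
Definition example_cone : set V := msum disk_cone quartic_cone.

Lemma disk_cone_cone : is_cone disk_cone.
Proof.
split; first by rewrite /disk_cone /= !coordE expr0n /= addr0.
move=> v a [vZ [vT vXY]] a_ge0; rewrite /disk_cone /= !coordE vZ mulr0 mulr_ge0 //.
by rewrite !exprMn -mulrDr ler_wpM2l ?sqr_ge0.
Qed.

Lemma disk_cone_add : addr_closed_set disk_cone.
Proof.
move=> u v [uZ [uT uXY]] [vZ [vT vXY]]; rewrite /disk_cone /= !coordE uZ vZ addr0.
by rewrite addr_ge0 // lorentz_add.
Qed.

Lemma quartic_cone_cone : is_cone quartic_cone.
Proof.
split; first by rewrite /quartic_cone /= !coordE expr0n /= mul0r.
move=> v a [vXT [vT [vZ vYZT]]] a_ge0; rewrite /quartic_cone /= !coordE vXT !mulr_ge0 //.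
rewrite exprMn (_ : a * cZ v * (a * cT v) ^+ 3 = a ^+ 4 * (cZ v * cT v ^+ 3)); last by ring.
by rewrite ler_wpM2l ?exprn_ge0.
Qed.

Lemma quartic_cone_add : addr_closed_set quartic_cone.
Proof.
move=> u v [uXT [uT [uZ uYZT]]] [vXT [vT [vZ vYZT]]].
by rewrite /quartic_cone /= !coordE uXT vXT !addr_ge0 // quartic_add.
Qed.

Lemma example_cone_cone : is_cone example_cone.
Proof. exact: is_cone_msum disk_cone_cone quartic_cone_cone. Qed.

Lemma example_cone_add : addr_closed_set example_cone.
Proof. exact: msum_addr_closed disk_cone_add quartic_cone_add. Qed.

Lemma disk_example_cone v : disk_cone v -> example_cone v.
Proof. exact: msum_subl quartic_cone_cone.1 v. Qed.

Lemma quartic_example_cone v : quartic_cone v -> example_cone v.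
Proof. exact: msum_subr disk_cone_cone.1 v. Qed.

End TheCone.
Arguments disk_cone {R}.
Arguments quartic_cone {R}.
Arguments example_cone {R}.

Section Closedness.
Variable R : realType.
Notation V := 'rV[R]_4.
Implicit Types (f g : V -> R).

Let continuous_add f g : continuous f -> continuous g -> continuous (fun v => f v + g v).
Proof. by move=> cf cg v; exact: continuousD (cf v) (cg v). Qed.

Let continuous_mul f g : continuous f -> continuous g -> continuous (fun v => f v * g v).
Proof. by move=> cf cg v; exact: continuousM (cf v) (cg v). Qed.

Let continuous_coord i : continuous (fun v : V => v ord0 i).
Proof. exact: coord_continuous. Qed.

Let closed_le_fun f g : continuous f -> continuous g -> closed [set v | f v <= g v].
Proof.
move=> cf cg; rewrite (_ : [set v | f v <= g v] = (fun v => g v - f v) @^-1` [set x | 0 <= x]).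
  apply: preimage_closed; last exact: closed_ge.
  by move=> v _; exact: continuousB (cg v) (cf v).
by apply/funext => v; apply/propext; rewrite /= subr_ge0.
Qed.

Let closed_eq_fun f g : continuous f -> continuous g -> closed [set v | f v = g v].
Proof.
move=> cf cg; rewrite (_ : [set v | f v = g v] = [set v | f v <= g v] `&` [set v | g v <= f v]).
  by apply: closedI; exact: closed_le_fun.
apply/funext => v; apply/propext => /=.
by split => [->|[fg gf]]; [rewrite lexx | apply/le_anti; rewrite fg gf].
Qed.

Ltac polynomial_continuous := repeat first
  [ apply: continuous_add | apply: continuous_mul
  | exact: continuous_coord | exact: cst_continuous ].

Lemma disk_cone_closed : closed (@disk_cone R).
Proof.
rewrite (_ : @disk_cone R = [set v | cZ v = 0] `&` [set v | 0 <= cT v] `&`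
   [set v | cX v * cX v + cY v * cY v <= cT v * cT v]); last first.
  by apply/funext => v; apply/propext; rewrite /disk_cone /= !expr2; split => [[? []]|[[? ?]]].
by apply: closedI; [apply: closedI|];
  [apply: closed_eq_fun|apply: closed_le_fun|apply: closed_le_fun];
  polynomial_continuous.
Qed.

Lemma quartic_cone_closed : closed (@quartic_cone R).
Proof.
rewrite (_ : @quartic_cone R =
   [set v | cX v = cT v] `&` [set v | 0 <= cT v] `&` [set v | 0 <= cZ v] `&`
   [set v | cY v * (cY v * (cY v * cY v)) <= cZ v * (cT v * (cT v * cT v))]); last first.
  apply/funext => v; apply/propext; rewrite /quartic_cone /= !exprS expr0 !mulr1.
  by split => [[? [? []]]|[[[? ?] ?] ?]].
by apply: closedI; [apply: closedI; [apply: closedI|]|];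
  [apply: closed_eq_fun|apply: closed_le_fun|apply: closed_le_fun|apply: closed_le_fun];
  polynomial_continuous.
Qed.

Lemma disk_quartic_normr_le (a b : V) : disk_cone a -> quartic_cone b ->
  `|a| <= `|a + b| /\ `|b| <= `|a + b|.
Proof.
move=> [aZ [aT aXY]] [bXT [bT [bZ bYZT]]].
set M := `|a + b|; have M_ge0 : 0 <= M := normr_ge0 _.
have coord_le (f : V -> R) i : (forall v, f v = v ord0 i) -> f (a + b) <= M.
  by move=> fE; rewrite fE (le_trans (ler_norm _)) // normr_coord_le.
have T_le : cT a + cT b <= M by rewrite -cTD; apply: coord_le.
have Z_le : cZ b <= M by rewrite -[cZ b]add0r -aZ -cZD; apply: coord_le.
split; apply: normr_le4 => //.
- by rewrite ler_norml; apply/andP; split; nra.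
- by rewrite ler_norml; apply/andP; split; nra.
- by rewrite aZ normr0.
- by rewrite ger0_norm //; lra.
- by rewrite bXT ger0_norm //; lra.
- have Y4 : cY b ^+ 4 <= M ^+ 4.
    apply: le_trans bYZT _; rewrite [M ^+ 4]exprS ler_pM ?exprn_ge0 //.
    by rewrite lerXn2r ?nnegrE //; lra.
  by rewrite -(@ler_pXn2r _ 4) ?nnegrE // -normrX ger0_norm // exprn_even_ge0.
- by rewrite ger0_norm.
- by rewrite ger0_norm //; lra.
Qed.

Lemma example_cone_closed : closed (@example_cone R).
Proof.
exact: closed_msum disk_cone_closed quartic_cone_closed disk_quartic_normr_le.
Qed.

End Closedness.

(** * Non-amenability *)

Section NotAmenable.
Variable R : realType.
Notation V := 'rV[R]_4.
Implicit Types (u v : V).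

Lemma example_cone_Z_ge0 v : example_cone v -> 0 <= cZ v.
Proof. by move=> [a [aZ _] [b [_ [_ [bZ _]]] <-]]; rewrite cZD aZ add0r. Qed.

Lemma example_cone_Z_eq0 v : example_cone v -> cZ v = 0 -> disk_cone v.
Proof.
move=> [a Ka [b [bXT [bT [_ bYZT]]] <-]]; have [aZ _] := Ka.
rewrite cZD aZ add0r => bZ.
apply: disk_cone_add Ka _; move: bYZT; rewrite bZ mul0r => /expr4_le0 bY.
by rewrite /disk_cone /= bZ bY bXT expr0n /= addr0.
Qed.

Lemma disk_cone_face : is_face example_cone (@disk_cone R).
Proof.
split; first exact: disk_example_cone.
split; first exact: disk_cone_closed.
split; first exact: cone_convex (disk_cone_cone R) (@disk_cone_add R).
move=> x y a Kx Ky a_gt0 a_lt1 [+ _]; rewrite !coordE => Z0.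
have := example_cone_Z_ge0 Kx; have := example_cone_Z_ge0 Ky => yZ xZ.
by split; apply: example_cone_Z_eq0 => //; nra.
Qed.

Lemma disk_cone_dual k : 0 <= cT k -> cX k ^+ 2 + cY k ^+ 2 <= cT k ^+ 2 ->
  dual_cone (@disk_cone R) k.
Proof.
move=> kT kXY a [aZ [aT aXY]]; rewrite dotv4E aZ mulr0 addr0.
have := @lorentz_dot _ (- cX k) (- cY k) _ (cX a) (cY a) _ kT aT; rewrite !sqrrN => /(_ kXY aXY).
lra.
Qed.

Lemma aff_disk_cone s : aff (@disk_cone R) (row4 1 s 0 1).
Proof.
pose l (i : 'I_3) : R := nth 0 [:: 1; 1; -1] i.
pose y (i : 'I_3) := nth 0 [:: row4 1 0 0 1; row4 0 s 0 `|s|; row4 0 0 0 `|s|] i.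
exists 3, l, y; split; last split.
- by move=> [[|[|[|i]]] lti] //=; rewrite /disk_cone /= !coordE ?real_normK ?num_real //
    ?expr0n /= ?add0r ?addr0 ?expr1n ?normr_ge0 ?sqr_ge0 ?lexx ?ler01.
- by rewrite !big_ord_recr big_ord0 /= /l /=; lra.
- rewrite !big_ord_recr big_ord0 /= /l /y /=.
  by apply: row4P; rewrite !coordE; lra.
Qed.

Lemma edist_disk_cone_ge (s : R) : 0 < s <= 1 ->
  s ^+ 2 / 5 <= edist (row4 1 s 0 1) disk_cone.
Proof.
move=> /andP[s_gt0 s_le1].
(* the tangent plane to disk_cone along the ray through ((4 - s^2, 4 s) / (4 + s^2), 0, 1) *)
pose w : V := row4 (4 - s ^+ 2) (4 * s) 0 (- (4 + s ^+ 2)).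
have s2_le1 : s ^+ 2 <= 1 by rewrite expr_le1 // ltW.
have tangent y : disk_cone y -> dotv w y <= 0.
  have kT : 0 <= 4 + s ^+ 2 by rewrite addr_ge0 ?sqr_ge0.
  have kXY : (s ^+ 2 - 4) ^+ 2 + (- (4 * s)) ^+ 2 <= (4 + s ^+ 2) ^+ 2.
    by rewrite le_eqVlt; apply/orP; left; apply/eqP; ring.
  move=> Dy; have := @disk_cone_dual (row4 (s ^+ 2 - 4) (- (4 * s)) 0 (4 + s ^+ 2)).
  rewrite !coordE => /(_ kT kXY y Dy); rewrite !dotv4E !coordE.
  lra.
have w_le : enorm w <= 10.
  rewrite enorm4E !coordE -(ger0_norm (ler0n _ 10)) -sqrtr_sqr ler_sqrt //.
  by have := sqr_ge0 s; nra.
have disk0 : (@disk_cone R) !=set0 by exists 0; exact: (disk_cone_cone R).1.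
have e_ge0 : 0 <= edist (row4 1 s 0 1) disk_cone.
  by apply: edist_ge => // y _; exact: enorm_ge0.
have := edist_ge_halfspace (row4 1 s 0 1) disk0 tangent.
rewrite dotv4E !coordE => /le_trans/(_ (ler_wpM2r e_ge0 w_le)).
lra.
Qed.

Lemma edist_example_cone_le (s : R) : 0 <= s -> edist (row4 1 s 0 1) example_cone <= s ^+ 4.
Proof.
move=> s_ge0.
have K_s : example_cone (row4 1 s (s ^+ 4) 1).
  apply: quartic_example_cone.
  by rewrite /quartic_cone /= !coordE expr1n mulr1 exprn_ge0.
apply: le_trans (edist_le _ K_s) _.
rewrite enorm4E !coordE !subrr sub0r sqrrN expr0n /= !add0r addr0.
by rewrite sqrtr_sqr ger0_norm // exprn_ge0.
Qed.

Lemma example_cone_not_amenable : ~ amenable (@example_cone R).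
Proof.
move=> amenableK.
have [|kappa [kappa_gt0 kappaP]] := amenableK _ disk_cone_face [set v : V | enorm v <= 2].
  by exists 2.
pose s := (5 * kappa + 1)^-1.
have s_gt0 : 0 < s by rewrite invr_gt0; lra.
have s_le1 : s <= 1 by rewrite invf_le1; lra.
have kappa_s : 5 * kappa * s < 1.
  by rewrite -[X in X * s](addrK 1) mulrBl mulfV ?mul1r; lra.
have : s ^+ 2 / 5 <= kappa * s ^+ 4.
  apply: le_trans (edist_disk_cone_ge _) _; first by rewrite s_gt0.
  apply: le_trans (kappaP _ (aff_disk_cone s) _) _.
    rewrite /= enorm4E !coordE expr0n expr1n /= addr0 -(ger0_norm (ler0n _ 2)) -sqrtr_sqr.
    by rewrite ler_sqrt // (_ : 2 ^+ 2 = 4) //; nra.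
  by apply: ler_wpM2l; [exact: ltW | exact: edist_example_cone_le (ltW s_gt0)].
have s2_gt0 : 0 < s ^+ 2 := exprn_gt0 2 s_gt0.
rewrite (_ : kappa * s ^+ 4 = kappa * s ^+ 2 * s ^+ 2); last by ring.
by rewrite ler_pdivrMr // mulrAC ler_pMl //; nra.
Qed.

End NotAmenable.

(** * Faces of the cone *)

Section QuarticTangent.
Variable R : realType.
Notation V := 'rV[R]_4.
Implicit Types (v : V) (s : R).

(* the tangent line z = 4 s^3 y - 3 s^4 of z = y^4 at (s, s^4), homogenised in t *)
Definition quartic_tangent s v := cZ v - 4 * s ^+ 3 * cY v + 3 * s ^+ 4 * cT v.

Definition quartic_ray (w : V) := (exists s, w = row4 1 s (s ^+ 4) 1) \/ w = row4 0 0 1 0.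

Lemma quartic_tangentD s u v :
  quartic_tangent s (u + v) = quartic_tangent s u + quartic_tangent s v.
Proof. by rewrite /quartic_tangent !coordE; ring. Qed.

Lemma quartic_cone_T0 v : quartic_cone v -> cT v = 0 -> cY v = 0.
Proof. by move=> [_ [_ [_]]] + vT; rewrite vT expr0n mulr0 => /expr4_le0. Qed.

Lemma quartic_tangent_sos s v : cT v ^+ 3 * quartic_tangent s v =
  (cZ v * cT v ^+ 3 - cY v ^+ 4) +
  (cY v - s * cT v) ^+ 2 * ((cY v + s * cT v) ^+ 2 + 2 * (s * cT v) ^+ 2).
Proof. by rewrite /quartic_tangent; ring. Qed.

Lemma quartic_tangent_ge0 s v : quartic_cone v -> 0 <= quartic_tangent s v.
Proof.
move=> Qv; have [_ [vT [vZ vYZT]]] := Qv.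
have [T0|T_neq0] := eqVneq (cT v) 0.
  by rewrite /quartic_tangent (quartic_cone_T0 Qv T0) T0 !mulr0 subr0 addr0.
have T3_gt0 : 0 < cT v ^+ 3 by rewrite exprn_gt0 // lt_neqAle eq_sym T_neq0.
rewrite -(pmulr_rge0 _ T3_gt0) quartic_tangent_sos.
apply: addr_ge0; first by rewrite subr_ge0.
by rewrite mulr_ge0 ?sqr_ge0 // addr_ge0 ?sqr_ge0 // mulr_ge0 ?sqr_ge0.
Qed.

Lemma quartic_tangent_eq0 s v : quartic_cone v -> quartic_tangent s v = 0 ->
  v = cT v *: row4 1 s (s ^+ 4) 1.
Proof.
move=> Qv tan0; have [vXT [vT [vZ vYZT]]] := Qv.
have [T0|T_neq0] := eqVneq (cT v) 0.
  have Y0 := quartic_cone_T0 Qv T0.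
  move: tan0; rewrite /quartic_tangent Y0 T0 !mulr0 subr0 addr0 => Z0.
  by apply: row4P; rewrite !coordE ?vXT ?T0 ?Y0 ?Z0 ?mul0r.
have := quartic_tangent_sos s v; rewrite tan0 mulr0.
set P := (cY v - s * cT v) ^+ 2 * _ => sos.
have P_ge0 : 0 <= P by rewrite mulr_ge0 ?sqr_ge0 // addr_ge0 ?sqr_ge0 // mulr_ge0 ?sqr_ge0.
have {sos}[ZT P0] : cZ v * cT v ^+ 3 = cY v ^+ 4 /\ P = 0 by split; lra.
have Ys : cY v = s * cT v.
  move/eqP: P0; rewrite mulf_eq0 => /orP[]; first by rewrite sqrf_eq0 subr_eq0 => /eqP.
  move=> /eqP sum0; have := sqr_ge0 (cY v + s * cT v); have := sqr_ge0 (s * cT v).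
  move=> h1 h2; have /eqP : (s * cT v) ^+ 2 = 0 by lra.
  have /eqP : (cY v + s * cT v) ^+ 2 = 0 by lra.
  by rewrite !sqrf_eq0 => /eqP + /eqP sT0; rewrite sT0 addr0.
have Zs : cZ v = s ^+ 4 * cT v.
  by apply: (mulIf (expf_neq0 3 T_neq0)); rewrite ZT Ys; ring.
by apply: row4P; rewrite !coordE ?vXT ?Ys ?Zs; ring.
Qed.

Lemma quartic_tangent_boundary v : 0 < cT v -> cY v ^+ 4 = cZ v * cT v ^+ 3 ->
  quartic_tangent (cY v / cT v) v = 0.
Proof.
move=> vT YZT; have T_neq0 : cT v != 0 by rewrite gt_eqF.
rewrite /quartic_tangent (_ : cZ v = cY v ^+ 4 / cT v ^+ 3); last first.
  by rewrite YZT mulfK // expf_neq0.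
by field.
Qed.

End QuarticTangent.

Section FacesOfExampleCone.
Variable R : realType.
Notation V := 'rV[R]_4.
Implicit Types (u v p q : V).
Variable F : set V.
Hypothesis faceF : is_face example_cone F.

Let coneK : is_cone (@example_cone R) := example_cone_cone R.

Lemma face_disk_interior p : disk_cone p -> F p -> cX p ^+ 2 + cY p ^+ 2 < cT p ^+ 2 ->
  disk_cone `<=` F.
Proof.
move=> [pZ [pT pXY]] Fp pXY_lt q Dq; have [qZ [qT qXY]] := Dq.
(* in the coordinates w = t - x, t' = t + x, the disk cone is the rotated cone y^2 <= w t' *)
have Wp : 0 < cT p - cX p by nra.
have Tp : 0 < cT p + cX p by nra.
have Yp : cY p ^+ 2 < (cT p - cX p) * (cT p + cX p) by nra.
have Wq : 0 <= cT q - cX q by nra.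
have Tq : 0 <= cT q + cX q by nra.
have [a a_gt0 /(_ a a_gt0 (lexx _)) [Ya Wa Ta]] := rotated_lorentz_perturb (cY q) Yp Wp Tp Wq Tq.
apply: (face_dominated coneK faceF Fp a_gt0 _ (disk_example_cone Dq)).
apply: disk_example_cone; rewrite /disk_cone /= !coordE pZ qZ mulr0 subrr.
by split => //; split; nra.
Qed.

(* equality in the triangle inequality of the Lorentz cone *)
Lemma disk_boundary_parallel p a : cZ a = 0 -> 0 < cT p ->
    cX p ^+ 2 + cY p ^+ 2 = cT p ^+ 2 -> cX a ^+ 2 + cY a ^+ 2 = cT a ^+ 2 ->
    (cX p + cX a) ^+ 2 + (cY p + cY a) ^+ 2 = (cT p + cT a) ^+ 2 ->
  a = cT a *: row4 (cX p / cT p) (cY p / cT p) 0 1.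
Proof.
move=> aZ pT eqp eqa eqpa.
have dot : cX p * cX a + cY p * cY a = cT p * cT a.
  have : (cX p + cX a) ^+ 2 + (cY p + cY a) ^+ 2 - (cT p + cT a) ^+ 2 =
    (cX p ^+ 2 + cY p ^+ 2 - cT p ^+ 2) + (cX a ^+ 2 + cY a ^+ 2 - cT a ^+ 2) +
    2 * (cX p * cX a + cY p * cY a - cT p * cT a) by ring.
  by rewrite eqp eqa eqpa; lra.
have /eqP : (cX a * cT p - cX p * cT a) ^+ 2 + (cY a * cT p - cY p * cT a) ^+ 2 = 0.
  have -> : (cX a * cT p - cX p * cT a) ^+ 2 + (cY a * cT p - cY p * cT a) ^+ 2 =
    (cX a ^+ 2 + cY a ^+ 2) * cT p ^+ 2 + (cX p ^+ 2 + cY p ^+ 2) * cT a ^+ 2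
    - 2 * cT p * cT a * (cX p * cX a + cY p * cY a) by ring.
  by rewrite eqa eqp dot; ring.
rewrite paddr_eq0 ?sqr_ge0 // !sqrf_eq0 !subr_eq0 => /andP[/eqP aX /eqP aY].
have T_neq0 : cT p != 0 by rewrite gt_eqF.
apply: row4P; rewrite !coordE ?aZ ?mulr0 ?mulr1 //; apply: (mulIf T_neq0).
  by rewrite aX; field.
by rewrite aY; field.
Qed.

Lemma face_disk_cases : disk_cone `<=` F \/
  exists c d : R, c ^+ 2 + d ^+ 2 = 1 /\
    forall a, disk_cone a -> F a -> a = cT a *: row4 c d 0 1.
Proof.
have [[p [Dp Fp pXY]]|no_interior] :=
  pselect (exists p, [/\ disk_cone p, F p & cX p ^+ 2 + cY p ^+ 2 < cT p ^+ 2]).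
  by left; exact: face_disk_interior Dp Fp pXY.
right.
have boundary a : disk_cone a -> F a -> cX a ^+ 2 + cY a ^+ 2 = cT a ^+ 2.
  move=> Da Fa; have [_ [_ aXY]] := Da; apply/eqP; rewrite eq_le aXY leNgt /=.
  by apply/negP => aXY_lt; apply: no_interior; exists a.
have [[p [Dp Fp pT]]|T0] := pselect (exists p, [/\ disk_cone p, F p & 0 < cT p]).
  exists (cX p / cT p), (cY p / cT p); split.
    by rewrite !expr_div_n -mulrDl boundary // divff // expf_neq0 // gt_eqF.
  move=> a Da Fa; have [aZ _] := Da.
  have := boundary _ (disk_cone_add Dp Da) (face_add coneK faceF Fp Fa).
  rewrite !coordE => eqpa.
  exact: disk_boundary_parallel aZ pT (boundary _ Dp Fp) (boundary _ Da Fa) eqpa.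
exists 1, 0; split; first by rewrite expr1n expr0n addr0.
move=> a Da Fa; have [aZ [aT _]] := Da.
have {}aT : cT a = 0.
  by apply/eqP; rewrite eq_le aT andbT leNgt; apply/negP => aT_gt0; apply: T0; exists a.
have := boundary _ Da Fa; rewrite aT expr0n => /eqP.
rewrite paddr_eq0 ?sqr_ge0 // !sqrf_eq0 => /andP[/eqP aX /eqP aY].
by apply: row4P; rewrite !coordE ?aX ?aY ?aZ ?aT mul0r.
Qed.

Lemma face_quartic_interior p : quartic_cone p -> F p -> 0 < cT p ->
  cY p ^+ 4 < cZ p * cT p ^+ 3 -> quartic_cone `<=` F.
Proof.
move=> [pXT [_ [_ _]]] Fp pT pYZT q Qq; have [qXT [qT [qZ _]]] := Qq.
have [w w_gt0 [Yw wZ]] := quartic_interior_split pT pYZT.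
have Z_gt0 : 0 < cZ p.
  by rewrite -(pmulr_lgt0 _ pT) (le_lt_trans _ wZ) ?sqr_ge0.
have [a1 a1_gt0 perturbY] := rotated_lorentz_perturb (cY q) Yw w_gt0 pT (lexx 0) qT.
have [a2 a2_gt0 perturbw] := rotated_lorentz_perturb 0 wZ Z_gt0 pT qZ qT.
pose a := Num.min a1 a2.
have a_gt0 : 0 < a by rewrite lt_min a1_gt0 a2_gt0.
have a_le1 : a <= a1 by rewrite ge_min lexx.
have a_le2 : a <= a2 by rewrite ge_min lexx orbT.
have [Ya _ _] := perturbY a a_gt0 a_le1.
have [wa Za Ta] := perturbw a a_gt0 a_le2.
rewrite !mulr0 !subr0 in Ya wa.
apply: (face_dominated coneK faceF Fp a_gt0 _ (quartic_example_cone Qq)).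
apply: quartic_example_cone; rewrite /quartic_cone /= !coordE pXT qXT ltW // ltW //.
by do ?split; exact: quartic_le_of_rotated (ltW Ta) (ltW Ya) (ltW wa).
Qed.

Lemma face_quartic_cases : quartic_cone `<=` F \/
  exists2 w, quartic_ray w & forall b, quartic_cone b -> F b -> exists2 l, 0 <= l & b = l *: w.
Proof.
have [[p [Qp Fp pT pYZT]]|no_interior] :=
  pselect (exists p, [/\ quartic_cone p, F p, 0 < cT p & cY p ^+ 4 < cZ p * cT p ^+ 3]).
  by left; exact: face_quartic_interior Qp Fp pT pYZT.
right.
have boundary b : quartic_cone b -> F b -> 0 < cT b -> cY b ^+ 4 = cZ b * cT b ^+ 3.
  move=> Qb Fb bT; have [_ [_ [_ bYZT]]] := Qb; apply/eqP; rewrite eq_le bYZT leNgt /=.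
  by apply/negP => bYZT_lt; apply: no_interior; exists b.
have [[p [Qp Fp pT]]|T0] := pselect (exists p, [/\ quartic_cone p, F p & 0 < cT p]).
  pose s := cY p / cT p.
  exists (row4 1 s (s ^+ 4) 1); first by left; exists s.
  move=> b Qb Fb; have [_ [bT _]] := Qb; exists (cT b) => //.
  have Qpb := quartic_cone_add Qp Qb; have Fpb := face_add coneK faceF Fp Fb.
  have pbT : 0 < cT (p + b) by rewrite cTD ltr_wpDr.
  (* the tangent at the boundary point p + b vanishes on p and b, so both lie on one ray *)
  have := quartic_tangent_boundary pbT (boundary _ Qpb Fpb pbT).
  set s' := _ / _; rewrite quartic_tangentD => tan0.
  have := quartic_tangent_ge0 s' Qp; have := quartic_tangent_ge0 s' Qb => tb tp.
  have /(quartic_tangent_eq0 Qp) pE : quartic_tangent s' p = 0 by lra.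
  have ss' : s' = s.
    by rewrite /s {1}pE !coordE mulrAC divff ?mul1r // gt_eqF.
  by rewrite -ss'; apply: quartic_tangent_eq0 => //; lra.
exists (row4 0 0 1 0); first by right.
move=> b Qb Fb; have [bXT [bT [bZ _]]] := Qb; exists (cZ b) => //.
have {}bT : cT b = 0.
  by apply/eqP; rewrite eq_le bT andbT leNgt; apply/negP => bT_gt0; apply: T0; exists b.
by apply: row4P; rewrite !coordE ?bXT ?bT ?(quartic_cone_T0 Qb bT); ring.
Qed.

End FacesOfExampleCone.

(** * Niceness *)

Section DualOfExampleCone.
Variable R : realType.
Notation V := 'rV[R]_4.
Implicit Types (k v y w : V).

Lemma quartic_dotv k v : quartic_cone v ->
  dotv k v = (cX k + cT k) * cT v + cY k * cY v + cZ k * cZ v.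
Proof. by move=> [vXT _]; rewrite dotv4E vXT; ring. Qed.

Lemma example_cone_dual k : 0 <= cT k -> cX k ^+ 2 + cY k ^+ 2 <= cT k ^+ 2 ->
    (forall v, quartic_cone v -> 0 <= (cX k + cT k) * cT v + cY k * cY v + cZ k * cZ v) ->
  dual_cone example_cone k.
Proof.
move=> kT kXY kQ; apply: dual_cone_msum; first exact: disk_cone_dual.
by move=> v Qv; rewrite quartic_dotv // kQ.
Qed.

Lemma disk_cone_dual_coord k : dual_cone disk_cone k ->
  0 <= cT k /\ cX k ^+ 2 + cY k ^+ 2 <= cT k ^+ 2.
Proof.
move=> kD.
have kT : 0 <= cT k.
  have := kD (row4 0 0 0 1); rewrite dotv4E !coordE !mulr0 mulr1 !add0r; apply.
  by rewrite /disk_cone /= !coordE expr0n expr1n /= add0r ler01.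
split => //.
(* test k against the boundary ray opposite to (x_k, y_k) *)
pose r := Num.sqrt (cX k ^+ 2 + cY k ^+ 2).
have r_ge0 : 0 <= r := sqrtr_ge0 _.
have rE : r ^+ 2 = cX k ^+ 2 + cY k ^+ 2 by rewrite sqr_sqrtr // addr_ge0 ?sqr_ge0.
have Dr : disk_cone (row4 (- cX k) (- cY k) 0 r).
  by rewrite /disk_cone /= !coordE !sqrrN rE.
have := kD _ Dr; rewrite dotv4E !coordE mulr0 addr0.
have -> : cX k * - cX k + cY k * - cY k + cT k * r = r * (cT k - r).
  by rewrite mulrBr -expr2 rE; ring.
have [r0|r_neq0] := eqVneq r 0; first by rewrite -rE r0 expr0n /= sqr_ge0.
rewrite pmulr_rge0 ?lt_neqAle 1?eq_sym ?r_neq0 // subr_ge0 => rT.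
by rewrite -rE ler_sqr ?nnegrE.
Qed.

Lemma quartic_linear_ge0 (b d y z t : R) : 0 < b -> 0 <= t -> 0 <= z ->
  y ^+ 4 <= z * t ^+ 3 -> 0 <= b * t + d * y + d ^+ 4 / (8 * b ^+ 3) * z.
Proof.
move=> b_gt0 t_ge0 z_ge0 yzt.
have b3_gt0 : 0 < 8 * b ^+ 3 by rewrite mulr_gt0 ?exprn_gt0.
set l := d ^+ 4 / (8 * b ^+ 3).
have l_ge0 : 0 <= l by rewrite divr_ge0 ?exprn_even_ge0 ?ltW.
have lE : l * (8 * b ^+ 3) = d ^+ 4 by rewrite divfK ?gt_eqF.
have [t0|t_neq0] := eqVneq t 0.
  move: yzt; rewrite t0 expr0n /= mulr0 => /expr4_le0 ->.
  by rewrite !mulr0 !add0r mulr_ge0.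
have t3_gt0 : 0 < t ^+ 3 by rewrite exprn_gt0 // lt_neqAle eq_sym t_neq0.
rewrite -(pmulr_rge0 _ t3_gt0) -(pmulr_rge0 _ b3_gt0).
(* AM-GM in the form 8 b^4 t^4 + 8 b^3 m t^3 + m^4 >= 0, with m = d y *)
have sos : 0 <= 8 * b ^+ 4 * t ^+ 4 + 8 * b ^+ 3 * (d * y) * t ^+ 3 + (d * y) ^+ 4.
  have -> : 8 * b ^+ 4 * t ^+ 4 + 8 * b ^+ 3 * (d * y) * t ^+ 3 + (d * y) ^+ 4 =
    ((d * y) ^+ 2 - 2 * b ^+ 2 * t ^+ 2) ^+ 2 + 4 * (b * t * (d * y + b * t)) ^+ 2 by ring.
  by apply: addr_ge0; [exact: sqr_ge0 | apply: mulr_ge0; [|exact: sqr_ge0]].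
apply: le_trans sos _.
have -> : 8 * b ^+ 3 * (t ^+ 3 * (b * t + d * y + l * z)) =
  8 * b ^+ 4 * t ^+ 4 + 8 * b ^+ 3 * (d * y) * t ^+ 3 + l * (8 * b ^+ 3) * (z * t ^+ 3) by ring.
by rewrite lerD2l lE exprMn ler_wpM2l ?exprn_even_ge0.
Qed.

Lemma disk_dual_extend y : dual_cone disk_cone y ->
  exists l, dual_cone example_cone (row4 (cX y) (cY y) l (cT y)).
Proof.
move=> yD; have [yT yXY] := disk_cone_dual_coord yD.
set b := cX y + cT y.
have b_ge0 : 0 <= b.
  have := yD (row4 1 0 0 1); rewrite dotv4E !coordE /b !mulr0 !mulr1 !addr0; apply.
  by rewrite /disk_cone /= !coordE expr1n expr0n addr0 ler01.
exists (cY y ^+ 4 / (8 * b ^+ 3)); apply: example_cone_dual; rewrite ?coordE //.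
move=> v [_ [vT [vZ vYZT]]]; rewrite -/b.
have [b0|b_neq0] := eqVneq b 0.
  have -> : cY y = 0.
    by apply/eqP; rewrite -sqrf_eq0 eq_le sqr_ge0 andbT; move: b0; rewrite /b; nra.
  by rewrite b0 expr0n /= !mul0r !add0r.
by apply: quartic_linear_ge0; rewrite // lt_neqAle eq_sym b_neq0.
Qed.

Lemma quartic_poly_ge0_lin0 (a c : R) : (forall s, 0 <= a * s + c * s ^+ 4) -> a = 0.
Proof.
move=> ge0; apply/eqP/negPn/negP => a_neq0.
have a2_gt0 : 0 < a ^+ 2 by rewrite exprn_even_gt0.
have ca_ge0 : 0 <= `|c| * a ^+ 2 by rewrite mulr_ge0 ?sqr_ge0.
(* at s = - a e the linear term -a^2 e wins as soon as |c| a^2 e < 1 *)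
pose e := (1 + `|c| * a ^+ 2)^-1.
have e_gt0 : 0 < e by rewrite invr_gt0; lra.
have eE : e * (1 + `|c| * a ^+ 2) = 1 by rewrite mulVf //; lra.
have e_le1 : e <= 1 by rewrite invf_le1 //; lra.
clearbody e.
have e3_le : e ^+ 3 <= e.
  rewrite [e ^+ 3]exprS; apply: ler_piMr; first exact: ltW.
  by rewrite expr_le1 // ltW.
have small : c * a ^+ 2 * e ^+ 3 < 1.
  have h1 : c * a ^+ 2 * e ^+ 3 <= `|c| * a ^+ 2 * e ^+ 3.
    apply: ler_wpM2r; first exact: exprn_ge0 (ltW e_gt0).
    by apply: ler_wpM2r; [exact: sqr_ge0 | exact: ler_norm].
  have h2 := ler_wpM2l ca_ge0 e3_le.
  nra.
have := ge0 (- a * e).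
have -> : a * (- a * e) + c * (- a * e) ^+ 4 = a ^+ 2 * e * (c * a ^+ 2 * e ^+ 3 - 1) by ring.
by rewrite (pmulr_rge0 _ (mulr_gt0 a2_gt0 e_gt0)) subr_ge0 leNgt small.
Qed.

Lemma quartic_dual_extend y : dual_cone quartic_cone y ->
  exists mu, dual_cone example_cone (y + mu *: row4 (-1) 0 0 1).
Proof.
move=> yQ; set b := cX y + cT y.
have yQ_s s : 0 <= b + cY y * s + cZ y * s ^+ 4.
  have Qs : quartic_cone (row4 1 s (s ^+ 4) 1).
    by rewrite /quartic_cone /= !coordE expr1n mulr1 ler01 exprn_even_ge0.
  by have := yQ _ Qs; rewrite quartic_dotv // !coordE /b mulr1.
have b_ge0 : 0 <= b by have := yQ_s 0; rewrite expr0n /= !mulr0 !addr0.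
(* mu is large enough that (x, y, t) + mu (-1, 0, 1) enters the Lorentz cone *)
exists ((cX y ^+ 2 + cY y ^+ 2) / (2 * b) + `|cT y|).
set mu := _ + `|cT y|.
have T_le_mu : `|cT y| <= mu by rewrite lerDr divr_ge0 ?addr_ge0 ?sqr_ge0 ?mulr_ge0.
apply: example_cone_dual; rewrite !coordE ?mulr0 ?addr0 ?mulr1 ?mulrN1.
- by have := ler_norm (- cT y); rewrite normrN; lra.
- have [b0|b_neq0] := eqVneq b 0.
    have -> : cY y = 0.
      by apply: (@quartic_poly_ge0_lin0 _ (cZ y)) => s; have := yQ_s s; rewrite b0 add0r.
    have -> : cX y = - cT y by move: b0; rewrite /b; lra.
    by rewrite -opprD sqrrN expr0n addr0.
  have b_gt0 : 0 < b by rewrite lt_neqAle eq_sym b_neq0.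
  have muE : mu * (2 * b) = cX y ^+ 2 + cY y ^+ 2 + 2 * b * `|cT y|.
    by rewrite /mu mulrDl divfK ?mulf_neq0 ?pnatr_eq0 //; ring.
  have : 0 <= 2 * b * `|cT y| by rewrite !mulr_ge0.
  have : (cT y + mu) ^+ 2 - ((cX y - mu) ^+ 2 + cY y ^+ 2) =
    cT y ^+ 2 - cX y ^+ 2 - cY y ^+ 2 + mu * (2 * b) by rewrite /b; ring.
  by rewrite muE; have := sqr_ge0 (cT y); lra.
move=> v Qv; have := yQ v Qv; rewrite quartic_dotv //.
by rewrite (_ : cX y - mu + (cT y + mu) = cX y + cT y) //; ring.
Qed.

Lemma unit_circle_le1 (c d : R) : c ^+ 2 + d ^+ 2 = 1 -> c <= 1.
Proof. by move=> cd1; have := sqr_ge0 d; nra. Qed.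

Lemma unit_circle_d0 (c d : R) : c ^+ 2 + d ^+ 2 = 1 -> c = 1 -> d = 0.
Proof.
move=> + c1; rewrite c1 expr1n => cd1.
by apply/eqP; rewrite -sqrf_eq0; apply/eqP; lra.
Qed.

Lemma example_cone_dual_t : dual_cone example_cone (row4 0 0 0 1 : V).
Proof.
apply: example_cone_dual; rewrite !coordE ?expr0n ?expr1n ?add0r ?ler01 //.
by move=> v [_ [vT _]]; rewrite mul1r !mul0r !addr0.
Qed.

Lemma dual_vanishing_disk_ray c d w : c ^+ 2 + d ^+ 2 = 1 -> quartic_ray w ->
    w <> row4 c d 0 1 ->
  exists k, [/\ dual_cone example_cone k, dotv k (row4 c d 0 1) = 0 & 0 < dotv k w].
Proof.
move=> cd1 w_ray w_neq.
have c_le1 := unit_circle_le1 cd1.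
(* l is the junk value 0 when c = 1, where d = 0 *)
pose l := d ^+ 4 / (8 * (1 - c) ^+ 3).
have l_ge0 : 0 <= l by rewrite divr_ge0 ?exprn_even_ge0 ?mulr_ge0 ?exprn_ge0 ?subr_ge0.
have tangent (m z t : R) : 0 <= t -> 0 <= z -> m ^+ 4 <= z * t ^+ 3 ->
    0 <= (1 - c) * t + (- d) * m + l * z.
  move=> t_ge0 z_ge0 mzt; have [c1|c_neq1] := eqVneq c 1.
    by rewrite /l (unit_circle_d0 cd1 c1) c1 subrr oppr0 expr0n /= !mul0r !addr0.
  rewrite /l (_ : d ^+ 4 = (- d) ^+ 4); last by ring.
  apply: quartic_linear_ge0 => //.
  by rewrite subr_gt0 lt_neqAle c_neq1.
exists (row4 (- c) (- d) (l + 1) 1); split.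
- apply: example_cone_dual; rewrite !coordE ?sqrrN ?expr1n ?cd1 ?ler01 //.
  by move=> v [_ [vT [vZ vYZT]]]; have := tangent _ _ _ vT vZ vYZT; lra.
- by rewrite dotv4E !coordE mulr0 addr0 mulr1 !mulNr -opprD -!expr2 cd1 addNr.
case: w_ray w_neq => [[s ->] w_neq|-> _]; last by rewrite dotv4E !coordE; lra.
rewrite dotv4E !coordE mulr1 mulrDl mul1r.
have s4_ge0 : 0 <= s ^+ 4 by rewrite exprn_even_ge0.
have := tangent s (s ^+ 4) 1 ler01 s4_ge0; rewrite expr1n !mulr1 => /(_ (lexx _)) tan_ge0.
have [s0|s_neq0] := eqVneq s 0.
  move: w_neq tan_ge0; rewrite s0 expr0n /= !mulr0 !addr0 => w_neq _.
  have c_neq1 : c != 1.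
    by apply: contra_notN w_neq => /eqP c1; rewrite c1 (unit_circle_d0 cd1 c1).
  have c_lt1 : c < 1 by rewrite lt_neqAle c_neq1 c_le1.
  lra.
have : 0 < s ^+ 4 by rewrite exprn_even_gt0.
lra.
Qed.

Lemma dual_vanishing_quartic_ray c d w : c ^+ 2 + d ^+ 2 = 1 -> quartic_ray w ->
    w <> row4 c d 0 1 ->
  exists k, [/\ dual_cone example_cone k, dotv k w = 0 & 0 < dotv k (row4 c d 0 1)].
Proof.
move=> cd1 w_ray w_neq; case: w_ray w_neq => [[s ->] w_neq|-> _]; last first.
  exists (row4 0 0 0 1); rewrite !dotv4E !coordE.
  by split; [exact: example_cone_dual_t | ring | lra].
(* the tangent functional at (s, s^4), shifted by mu (-1, 0, 0, 1) into the Lorentz cone *)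
pose mu := 3 * s ^+ 2 + 1.
have mu_ge1 : 1 <= mu by have := sqr_ge0 s; rewrite /mu; lra.
have s4_ge0 : 0 <= s ^+ 4 by rewrite exprn_even_ge0.
have s6_ge0 : 0 <= s ^+ 6 by rewrite exprn_even_ge0.
have s8_ge0 : 0 <= s ^+ 8 by rewrite exprn_even_ge0.
have lorentz : mu ^+ 2 + 16 * s ^+ 6 + (9 * s ^+ 8 + 2 * s ^+ 6 + 6 * s ^+ 4) =
  (3 * s ^+ 4 + mu) ^+ 2 by rewrite /mu; ring.
exists (row4 (- mu) (- 4 * s ^+ 3) 1 (3 * s ^+ 4 + mu)); split.
- apply: example_cone_dual; rewrite !coordE.
  + lra.
  + by rewrite sqrrN (_ : (- 4 * s ^+ 3) ^+ 2 = 16 * s ^+ 6); [lra | ring].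
  + move=> v Qv; have := quartic_tangent_ge0 s Qv; rewrite /quartic_tangent.
    by rewrite (_ : - mu + (3 * s ^+ 4 + mu) = 3 * s ^+ 4); [lra | ring].
- by rewrite dotv4E !coordE; ring.
rewrite dotv4E !coordE mulr0 addr0 mulr1.
have [s0|s_neq0] := eqVneq s 0.
  have c_neq1 : c != 1.
    by apply: contra_notN w_neq => /eqP c1; rewrite s0 c1 (unit_circle_d0 cd1 c1) expr0n.
  have c_lt1 : c < 1 by rewrite lt_neqAle c_neq1 (unit_circle_le1 cd1).
  by rewrite /mu s0 expr0n /= !mulr0 !add0r; lra.
have s4_gt0 : 0 < s ^+ 4 by rewrite exprn_even_gt0.
(* Cauchy-Schwarz: mu c + 4 s^3 d <= sqrt (mu^2 + 16 s^6) < 3 s^4 + mu *)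
have cs : (mu * c + 4 * s ^+ 3 * d) ^+ 2 <= mu ^+ 2 + 16 * s ^+ 6.
  have : (mu * c + 4 * s ^+ 3 * d) ^+ 2 + (mu * d - 4 * s ^+ 3 * c) ^+ 2 =
    (mu ^+ 2 + 16 * s ^+ 6) * (c ^+ 2 + d ^+ 2) by ring.
  by rewrite cd1 mulr1; have := sqr_ge0 (mu * d - 4 * s ^+ 3 * c); lra.
have : mu * c + 4 * s ^+ 3 * d < 3 * s ^+ 4 + mu.
  by apply: ltr_of_sqr; [lra | rewrite -lorentz; lra].
lra.
Qed.

Lemma dual_prescribed c d w (al be : R) : c ^+ 2 + d ^+ 2 = 1 -> quartic_ray w ->
    0 <= al -> 0 <= be -> (w = row4 c d 0 1 -> al = be) ->
  exists k, [/\ dual_cone example_cone k, dotv k (row4 c d 0 1) = al & dotv k w = be].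
Proof.
move=> cd1 w_ray al_ge0 be_ge0 al_be.
have [w_eq|w_neq] := pselect (w = row4 c d 0 1).
  rewrite -(al_be w_eq) w_eq; exists (al *: row4 0 0 0 1); rewrite !dotvZl !dotv4E !coordE.
  by split; [exact: dual_cone_scale al_ge0 example_cone_dual_t | ring | ring].
have [ku [ku_dual ku_u ku_w]] := dual_vanishing_disk_ray cd1 w_ray w_neq.
have [kw [kw_dual kw_w kw_u]] := dual_vanishing_quartic_ray cd1 w_ray w_neq.
exists ((al / dotv kw (row4 c d 0 1)) *: kw + (be / dotv ku w) *: ku).
rewrite !dotvDl !dotvZl ku_u kw_w !mulr0 addr0 add0r !divfK ?gt_eqF //.
split => //; apply: dual_cone_add; apply: dual_cone_scale => //.
  by rewrite divr_ge0 // ltW.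
by rewrite divr_ge0 // ltW.
Qed.

End DualOfExampleCone.

Section NiceExampleCone.
Variable R : realType.
Notation V := 'rV[R]_4.
Implicit Types (k v y w : V).
Variables (F : set V) (y : V).
Hypotheses (faceF : is_face example_cone F) (yF : dual_cone F y).

Let face_split f : F f ->
  exists a b, [/\ disk_cone a, quartic_cone b, F a, F b & f = a + b].
Proof. exact: face_msum (disk_cone_cone R) (quartic_cone_cone R) faceF. Qed.

Let e1 : V := row4 1 0 0 1.
Let disk_e1 : disk_cone e1.
Proof. by rewrite /disk_cone /= !coordE expr1n expr0n addr0 ler01. Qed.
Let quartic_e1 : quartic_cone e1.
Proof. by rewrite /quartic_cone /= !coordE expr1n expr0n mulr1 ler01 lexx. Qed.

Lemma dual_extension_disk_full w : disk_cone `<=` F ->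
    (forall b, quartic_cone b -> F b -> exists2 l, 0 <= l & b = l *: w) ->
  exists2 k, dual_cone example_cone k & forall f, F f -> dotv k f = dotv y f.
Proof.
move=> diskF quarticF.
(* e1 lies in both cones, so the ray of w is the ray of e1, on which z = 0 *)
have [l _ e1E] := quarticF _ quartic_e1 (diskF _ disk_e1).
have wZ : cZ w = 0.
  have := congr1 (@cT R) e1E; have := congr1 (@cZ R) e1E; rewrite !coordE => /esym/eqP.
  by rewrite mulf_eq0 => /orP[/eqP l0|/eqP //]; rewrite l0 mul0r; lra.
have [lam lamD] := disk_dual_extend (fun a Da => yF (diskF a Da)).
exists (row4 (cX y) (cY y) lam (cT y)) => // f /face_split[a [b [[aZ _] Qb _ Fb ->]]].
have [? _ ->] := quarticF _ Qb Fb.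
by rewrite !dotvDr !dotv4E !coordE aZ wZ; ring.
Qed.

Lemma dual_extension_quartic_full c d : c ^+ 2 + d ^+ 2 = 1 ->
    (forall a, disk_cone a -> F a -> a = cT a *: row4 c d 0 1) -> quartic_cone `<=` F ->
  exists2 k, dual_cone example_cone k & forall f, F f -> dotv k f = dotv y f.
Proof.
move=> cd1 diskF quarticF.
have c1 : c = 1.
  by have := congr1 (@cX R) (diskF _ disk_e1 (quarticF _ quartic_e1)); rewrite !coordE mul1r.
have [mu muD] := quartic_dual_extend (fun b Qb => yF (quarticF b Qb)).
exists (y + mu *: row4 (-1) 0 0 1) => // f /face_split[a [b [Da [bXT _] Fa _ ->]]].
have aXT : cX a = cT a by have := congr1 (@cX R) (diskF _ Da Fa); rewrite !coordE c1 mulr1.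
by rewrite dotvDl dotvZl !dotv4E !coordE aXT bXT; ring.
Qed.

Lemma dual_extension_rays c d w : c ^+ 2 + d ^+ 2 = 1 -> quartic_ray w ->
    (forall a, disk_cone a -> F a -> a = cT a *: row4 c d 0 1) ->
    (forall b, quartic_cone b -> F b -> exists2 l, 0 <= l & b = l *: w) ->
  exists2 k, dual_cone example_cone k & forall f, F f -> dotv k f = dotv y f.
Proof.
move=> cd1 w_ray diskF quarticF; set u := row4 c d 0 1.
(* prescribe k on the two generating rays: equal to y on those that lie in F, 0 otherwise *)
pose al := if pselect (F u) is left _ then dotv y u else 0.
pose be := if pselect (F w) is left _ then dotv y w else 0.
have al_ge0 : 0 <= al by rewrite /al; case: pselect => // Fu; exact: yF.
have be_ge0 : 0 <= be by rewrite /be; case: pselect => // Fw; exact: yF.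
have al_be : w = u -> al = be by move=> wu; rewrite /al /be wu.
have [k [kD ku kw]] := dual_prescribed cd1 w_ray al_ge0 be_ge0 al_be.
exists k => // f /face_split[a [b [Da Qb Fa Fb ->]]]; rewrite !dotvDr.
have coneK := example_cone_cone R.
congr (_ + _).
  have aE := diskF _ Da Fa; rewrite aE !dotvZr.
  have [aT0|aT_neq0] := eqVneq (cT a) 0; first by rewrite aT0 !mul0r.
  have aT_gt0 : 0 < cT a by rewrite lt_neqAle eq_sym aT_neq0; case: Da => _ [].
  have Fu : F u by apply: (face_scale_inv coneK faceF aT_gt0); rewrite -aE.
  by rewrite ku /al; case: pselect => // /(_ Fu) [].
have [l l_ge0 bE] := quarticF _ Qb Fb; rewrite bE !dotvZr.
have [l0|l_neq0] := eqVneq l 0; first by rewrite l0 !mul0r.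
have l_gt0 : 0 < l by rewrite lt_neqAle eq_sym l_neq0.
have Fw : F w by apply: (face_scale_inv coneK faceF l_gt0); rewrite -bE.
by rewrite kw /be; case: pselect => // /(_ Fw) [].
Qed.

Lemma example_cone_dual_extension :
  exists2 k, dual_cone example_cone k & forall f, F f -> dotv k f = dotv y f.
Proof.
have [diskF|[c [d [cd1 diskF]]]] := face_disk_cases faceF;
  have [quarticF|[w w_ray quarticF]] := face_quartic_cases faceF.
- exists y => //; apply: dual_cone_msum => v Dv; apply: yF; [exact: diskF | exact: quarticF].
- exact: dual_extension_disk_full quarticF.
- exact: dual_extension_quartic_full cd1 diskF quarticF.
- exact: dual_extension_rays cd1 w_ray diskF quarticF.
Qed.

End NiceExampleCone.

Lemma example_cone_nice (R : realType) : nice (@example_cone R).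
Proof.
apply: nice_of_dual_extension => F y faceF yF.
exact: example_cone_dual_extension faceF yF.
Qed.

Theorem theorem5p3 :
  exists K : set 'rV[Rdefinitions.R]_4,
    closed_convex_cone K /\ nice K /\ ~ amenable K.
Proof.
exists example_cone; split; last split.
- split; first exact: example_cone_closed.
  split; last exact: example_cone_cone.
  exact: cone_convex (example_cone_cone _) (@example_cone_add _).
- exact: example_cone_nice.
- exact: example_cone_not_amenable.
Qed.
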